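(* Let $V$ be a vertex operator algebra. Any $C_1$-cofinite $\mathbb N$-gradable weak $V$-module is finitely generated.
   Context: A weak $V$-module $W$ is $\mathbb N$-gradable if there is a grading $W=\bigoplus_{n\in\mathbb N}W(n)$ with $v_mW(n)\subseteq W(\mathrm{wt}\,v+n-m-1)$ for homogeneous $v\in V$ and all $m\in\mathbb Z$ (where $Y_W(v,x)=\sum_m v_mx^{-m-1}$). $C_1(W)=\mathrm{span}\{v_{-1}w: v\in\bigoplus_{n\ge1}V_{(n)},\ w\in W\}$, and $W$ is $C_1$-cofinite if $\dim W/C_1(W)<\infty$. *)

From HB Require Import structures.
From mathcomp Require Import all_boot all_order all_algebra.
From mathcomp Require Import complex reals Rstruct.
Set Implicit Arguments. Unset Strict Implicit. Unset Printing Implicit Defensive.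
Import Order.TTheory GRing.Theory Num.Theory.
Local Open Scope ring_scope.

Definition CC : fieldType := (Rdefinitions.R)[i].

Section VOADefs.
Variable V : lmodType CC.

Definition in_span (P : V -> Prop) (v : V) : Prop :=
  exists (k : nat) (c : 'I_k -> CC) (x : 'I_k -> V),
    (forall j, P (x j)) /\ v = \sum_(j < k) c j *: x j.

Definition is_subspace (P : V -> Prop) : Prop :=
  P 0 /\ forall (a : CC) (x y : V), P x -> P y -> P (a *: x + y).

Definition fin_dim (P : V -> Prop) : Prop :=
  exists s : seq V, (forall x, x \in s -> P x) /\ forall v, P v -> in_span (fun x => x \in s) v.

(* G : int -> V -> Prop is a Z-grading: V = (+)_{n in Z} G n (internal direct sum) *)
Definition is_Zgrading (G : int -> V -> Prop) : Prop :=
  (forall n, is_subspace (G n)) /\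
  (forall v : V, exists (s : seq int) (f : int -> V),
      (forall n, G n (f n)) /\ v = \sum_(n <- s) f n) /\
  (forall (s : seq int) (f : int -> V), uniq s -> (forall n, G n (f n)) ->
      \sum_(n <- s) f n = 0 -> forall n, n \in s -> f n = 0).

(* finite sums: "eventually the partial sums of the two (formally infinite,
   but finitely supported) series over i >= 0 agree" *)
Definition series_eq (a b : nat -> V) : Prop :=
  exists N : nat, forall M : nat, (N <= M)%N ->
    \sum_(i < M) a i = \sum_(i < M) b i.
End VOADefs.

Definition binz (p : int) (i : nat) : CC :=
  (\prod_(j < i) (p%:~R - j%:R)) / (i`!)%:R.

(* vertex operator in components: Y u m v = u_m v, i.e. Y(u,x) = sum_m u_m x^{-m-1} *)
Definition vop (V W : lmodType CC) := V -> int -> W -> W.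

(* Borcherds (component form of the Jacobi) identity for Y : V -> End W,
   where YV is the vertex operator of V:
   sum_{i>=0} binom(m,i) (u_{l+i} v)_{m+n-i} w
     = sum_{i>=0} (-1)^i binom(l,i) (u_{m+l-i} v_{n+i} w - (-1)^l v_{n+l-i} u_{m+i} w) *)
Definition jacobi_identity (V W : lmodType CC) (YV : vop V V) (Y : vop V W) : Prop :=
  forall (u v : V) (w : W) (m n l : int),
    series_eq
      (fun i : nat => binz m i *: Y (YV u (l + i%:Z) v) (m + n - i%:Z) w)
      (fun i : nat => ((-1) ^+ i * binz l i) *:
          (Y u (m + l - i%:Z) (Y v (n + i%:Z) w)
           - ((-1) ^ l) *: Y v (n + l - i%:Z) (Y u (m + i%:Z) w))).

Definition vop_bilinear (V W : lmodType CC) (Y : vop V W) : Prop :=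
  (forall (a : CC) (u u' : V) m (w : W), Y (a *: u + u') m w = a *: Y u m w + Y u' m w) /\
  (forall (a : CC) (u : V) m (w w' : W), Y u m (a *: w + w') = a *: Y u m w + Y u m w').

Definition vop_truncation (V W : lmodType CC) (Y : vop V W) : Prop :=
  forall (u : V) (w : W), exists N : int, forall m : int, N <= m -> Y u m w = 0.

(* Vertex operator algebra (V, Y, 1, omega) with grading Vg and central charge c
   (Frenkel-Lepowsky-Meurman / Lepowsky-Li definition). *)
Record is_VOA (V : lmodType CC) (Vg : int -> V -> Prop) (Y : vop V V)
    (vac om : V) (c : CC) : Prop := {
  voa_grading : is_Zgrading Vg;
  voa_findim : forall n, fin_dim (Vg n);
  voa_lower : exists N : int, forall n, n < N -> forall v, Vg n v -> v = 0;
  voa_bilinear : vop_bilinear Y;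
  voa_trunc : vop_truncation Y;
  voa_vacuum : forall (m : int) (v : V), Y vac m v = if m == -1 then v else 0;
  voa_creation : forall u : V, Y u (-1) vac = u /\ forall m : int, 0 <= m -> Y u m vac = 0;
  voa_jacobi : jacobi_identity Y Y;
  (* L(n) = omega_{n+1}; Virasoro relations *)
  voa_virasoro : forall (m n : int) (v : V),
      Y om (m + 1) (Y om (n + 1) v) - Y om (n + 1) (Y om (m + 1) v)
      = (m - n)%:~R *: Y om (m + n + 1) v
        + (if m + n == 0 then ((m ^+ 3 - m)%:~R / 12%:R * c) *: v else 0);
  voa_om_wt : Vg 2 om;
  voa_L0 : forall (n : int) (v : V), Vg n v -> Y om 1 v = n%:~R *: v;
  voa_L_1 : forall (u : V) (m : int) (v : V),
      Y (Y om 0 u) m v = - (m%:~R) *: Y u (m - 1) v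
}.

Record is_weak_module (V : lmodType CC) (YV : vop V V) (vac : V)
    (W : lmodType CC) (YW : vop V W) : Prop := {
  wm_bilinear : vop_bilinear YW;
  wm_trunc : vop_truncation YW;
  wm_vacuum : forall (m : int) (w : W), YW vac m w = if m == -1 then w else 0;
  wm_jacobi : jacobi_identity YV YW
}.

(* N-gradable: W = (+)_{n in N} W(n) with v_m W(n) <= W(wt v + n - m - 1)
   for homogeneous v; we index by Z with W(k) = 0 for k < 0. *)
Definition N_gradable (V : lmodType CC) (Vg : int -> V -> Prop)
    (W : lmodType CC) (YW : vop V W) : Prop :=
  exists Wg : int -> W -> Prop,
    is_Zgrading Wg /\
    (forall k : int, k < 0 -> forall w, Wg k w -> w = 0) /\
    (forall (k : int) (v : V) (n m : int) (w : W),
        Vg k v -> Wg n w -> Wg (k + n - m - 1) (YW v m w)).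

Definition Vplus (V : lmodType CC) (Vg : int -> V -> Prop) (v : V) : Prop :=
  exists (s : seq int) (f : int -> V),
    (forall n, n \in s -> 1 <= n) /\ (forall n, Vg n (f n)) /\ v = \sum_(n <- s) f n.

Definition C1 (V : lmodType CC) (Vg : int -> V -> Prop)
    (W : lmodType CC) (YW : vop V W) : W -> Prop :=
  in_span (fun x => exists v w, Vplus Vg v /\ x = YW v (-1) w).

Definition C1_cofinite (V : lmodType CC) (Vg : int -> V -> Prop)
    (W : lmodType CC) (YW : vop V W) : Prop :=
  exists s : seq W, forall w : W,
    exists y z, in_span (fun x => x \in s) y /\ C1 Vg YW z /\ w = y + z.

Definition is_submodule (V : lmodType CC) (W : lmodType CC) (YW : vop V W)
    (P : W -> Prop) : Prop :=
  is_subspace P /\ forall (v : V) (m : int) (w : W), P w -> P (YW v m w).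

Definition finitely_generated (V : lmodType CC) (W : lmodType CC) (YW : vop V W) : Prop :=
  exists S : seq W, forall P : W -> Prop,
    is_submodule YW P -> (forall x, x \in S -> P x) -> forall w, P w.

(* Write W = (+)_{n >= 0} W(n) and choose finitely many s_1, ..., s_r spanning
   W modulo C_1(W).  The homogeneous components of the s_i generate W: let P be
   a submodule containing them; we show W(n) <= P by strong induction on n.
   For w in W(n) write w = y + z with y in span(s_i) and z in C_1(W).  Taking
   degree-n components, w is the degree-n part of y + z.  The degree-n part of
   y is a combination of homogeneous components of the s_i, hence in P.  The
   degree-n part of z is a combination of vectors v_{-1} t with v in V_(k),
   k >= 1, and t in W(n - k); by induction t lies in P, hence so does v_{-1} t. *)
From mathcomp Require Import all_boot all_order all_algebra.
From mathcomp Require Import complex reals Rstruct.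
From mathcomp Require Import zify.
Set Implicit Arguments. Unset Strict Implicit. Unset Printing Implicit Defensive.
Import GRing.Theory Num.Theory.
Local Open Scope ring_scope.

Section Subspaces.
Variable W : lmodType CC.
Variable P : W -> Prop.
Hypothesis subP : is_subspace P.

Lemma subspace0 : P 0.
Proof. by case: subP. Qed.

Lemma subspaceD x y : P x -> P y -> P (x + y).
Proof. by case: subP => _ H hx hy; have := H 1 x y hx hy; rewrite scale1r. Qed.

Lemma subspaceZ a x : P x -> P (a *: x).
Proof. by case: subP => P0 H hx; have := H a x 0 hx P0; rewrite addr0. Qed.

Lemma subspace_sum (I : Type) (r : seq I) (Pr : pred I) (F : I -> W) :
  (forall i, Pr i -> P (F i)) -> P (\sum_(i <- r | Pr i) F i).
Proof. by move=> H; apply: big_ind => //; [exact: subspace0 | exact: subspaceD]. Qed.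

End Subspaces.

(* Homogeneous decompositions with respect to a Z-grading G of W.  A finite
   decomposition is a list of (degree, vector) pairs; its degree-n component
   is the sum of the vectors of degree n. *)
Section Components.
Variable W : lmodType CC.
Variable G : int -> W -> Prop.
Hypothesis HG : is_Zgrading G.

Definition graded_list (l : seq (int * W)) : Prop :=
  forall p, p \in l -> G p.1 p.2.

Definition component (n : int) (l : seq (int * W)) : W :=
  \sum_(p <- l | p.1 == n) p.2.

Lemma grading_subspace n : is_subspace (G n).
Proof. by case: HG. Qed.

Lemma graded_decomposition w :
  exists l, graded_list l /\ w = \sum_(p <- l) p.2.
Proof.
have [s [f [Gf ->]]] := HG.2.1 w.
by exists [seq (n, f n) | n <- s]; split; [move=> p /mapP [n _ ->] | rewrite big_map].
Qed.

Lemma component_graded n l : graded_list l -> G n (component n l).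
Proof.
move=> Gl; rewrite /component big_seq_cond.
apply: (subspace_sum (grading_subspace n)) => p /andP [pl /eqP <-].
exact: Gl.
Qed.

Lemma sum_by_components l :
  \sum_(p <- l) p.2 = \sum_(m <- undup (map fst l)) component m l.
Proof.
rewrite /component (exchange_big_dep xpredT) //= [LHS]big_seq [RHS]big_seq.
apply: eq_bigr => p pl; rewrite -big_filter.
have p1s : p.1 \in undup (map fst l) by rewrite mem_undup; apply: map_f.
suff -> : [seq m <- undup (map fst l) | p.1 == m] = [:: p.1] by rewrite big_seq1.
rewrite -(filter_pred1_uniq (undup_uniq _) p1s).
by apply: eq_filter => m; rewrite /= eq_sym.
Qed.

Lemma component_sum0 l n :
  graded_list l -> \sum_(p <- l) p.2 = 0 -> component n l = 0.
Proof.
move=> Gl sum0; case: (boolP (n \in undup (map fst l))) => ns.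
  apply: (HG.2.2 _ (component^~ l)) ns.
  - exact: undup_uniq.
  - by move=> m; apply: component_graded.
  - by rewrite -sum_by_components.
rewrite /component big1_seq // => p /andP [/eqP e pl]; case/negP: ns.
by rewrite -e mem_undup; apply: map_f.
Qed.

Lemma component_homogeneous l n w :
  graded_list l -> G n w -> w = \sum_(p <- l) p.2 -> w = component n l.
Proof.
move=> Gl Gw e.
pose l' := (n, w) :: [seq (p.1, - p.2) | p <- l].
have Gl' : graded_list l'.
  move=> p; rewrite inE => /orP [/eqP -> //|/mapP [q ql ->] /=].
  by rewrite -scaleN1r; apply: (subspaceZ (grading_subspace _)); apply: Gl.
have := @component_sum0 l' n Gl'.
rewrite /component !big_cons /= eqxx !big_map /= !sumrN -e subrr.
by move=> /(_ erefl) /eqP; rewrite subr_eq0 => /eqP.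
Qed.

Lemma homogeneous_generators (s : seq W) : exists S : seq W,
  forall x, x \in s -> exists l, graded_list l /\ {subset map snd l <= S} /\
    x = \sum_(p <- l) p.2.
Proof.
elim: s => [|x s [S IH]]; first by exists [::].
have [lx [Glx ex]] := graded_decomposition x.
exists (map snd lx ++ S) => y; rewrite inE => /orP [/eqP -> | ys].
  by exists lx; do 2!split => //; move=> t tl; rewrite mem_cat tl.
have [l [Gl [lS ey]]] := IH y ys.
by exists l; do 2!split => //; move=> t /lS tS; rewrite mem_cat tS orbT.
Qed.

(* "The degree-n part of w lies in P", witnessed by a graded decomposition of
   w whose degree-n pieces all lie in P.  It is stable under linear
   combinations, and for w in G n it implies P w (deg_part_in_inP) by
   directness of the grading. *)
Variable P : W -> Prop.
Hypothesis subP : is_subspace P.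
Variable n : int.

Definition deg_part_in (w : W) : Prop :=
  exists l, graded_list l /\ (forall p, p \in l -> p.1 = n -> P p.2) /\
    w = \sum_(p <- l) p.2.

Lemma deg_part_in0 : deg_part_in 0.
Proof. by exists [::]; rewrite big_nil. Qed.

Lemma deg_part_inD x y : deg_part_in x -> deg_part_in y -> deg_part_in (x + y).
Proof.
move=> [l1 [G1 [P1 ->]]] [l2 [G2 [P2 ->]]]; exists (l1 ++ l2).
by rewrite big_cat; split; last split; move=> // p; rewrite mem_cat => /orP [];
  auto.
Qed.

Lemma deg_part_inZ a x : deg_part_in x -> deg_part_in (a *: x).
Proof.
move=> [l [Gl [Pl ->]]]; exists [seq (p.1, a *: p.2) | p <- l].
rewrite big_map scaler_sumr; split; last split => //.
  by move=> p /mapP [q ql ->] /=; apply: (subspaceZ (grading_subspace _)); apply: Gl.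
by move=> p /mapP [q ql ->] /= e; apply: (subspaceZ subP); apply: Pl.
Qed.

Lemma deg_part_in_sum (I : Type) (r : seq I) (Pr : pred I) (F : I -> W) :
  (forall i, Pr i -> deg_part_in (F i)) -> deg_part_in (\sum_(i <- r | Pr i) F i).
Proof. by move=> H; apply: big_ind => //; [exact: deg_part_in0 | exact: deg_part_inD]. Qed.

Lemma deg_part_in_span (S : W -> Prop) v :
  (forall x, S x -> deg_part_in x) -> in_span S v -> deg_part_in v.
Proof.
move=> SP [k [c [x [Sx ->]]]].
by apply: deg_part_in_sum => j _; apply: deg_part_inZ; apply: SP.
Qed.

Lemma deg_part_in_homogeneous m t : G m t -> (m = n -> P t) -> deg_part_in t.
Proof.
move=> Gt Pt; exists [:: (m, t)]; rewrite big_seq1.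
by split; last split; move=> // p; rewrite inE => /eqP ->.
Qed.

Lemma deg_part_in_inP w : G n w -> deg_part_in w -> P w.
Proof.
move=> Gw [l [Gl [Pl e]]]; rewrite (component_homogeneous Gl Gw e) /component.
rewrite big_seq_cond; apply: (subspace_sum subP) => p /andP [pl /eqP].
exact: Pl.
Qed.

End Components.

Section VopLinear.
Variables (V W : lmodType CC) (Y : vop V W).
Hypothesis bilY : vop_bilinear Y.

Lemma vop0l m w : Y 0 m w = 0.
Proof. by have := bilY.1 (-1) 0 0 m w; rewrite scaler0 addr0 scaleN1r addNr. Qed.

Lemma vop0r v m : Y v m 0 = 0.
Proof. by have := bilY.2 (-1) v m 0 0; rewrite scaler0 addr0 scaleN1r addNr. Qed.

Lemma vop_suml (I : Type) (r : seq I) (F : I -> V) m w :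
  Y (\sum_(i <- r) F i) m w = \sum_(i <- r) Y (F i) m w.
Proof.
apply: (big_morph (fun u => Y u m w)); last exact: vop0l.
by move=> x y; rewrite -[x]scale1r bilY.1 !scale1r.
Qed.

Lemma vop_sumr (I : Type) (r : seq I) (F : I -> W) v m :
  Y v m (\sum_(i <- r) F i) = \sum_(i <- r) Y v m (F i).
Proof.
apply: (big_morph (Y v m)); last exact: vop0r.
by move=> x y; rewrite -[x]scale1r bilY.2 !scale1r.
Qed.

End VopLinear.

Section Cofinite.
Variables (V : lmodType CC) (Vg : int -> V -> Prop).
Variables (W : lmodType CC) (YW : vop V W) (Wg : int -> W -> Prop).
Hypothesis bilYW : vop_bilinear YW.
Hypothesis gradWg : is_Zgrading Wg.
Hypothesis Wg_neg : forall k : int, k < 0 -> forall w, Wg k w -> w = 0.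
Hypothesis Wg_wt : forall (k : int) (v : V) (n m : int) (w : W),
  Vg k v -> Wg n w -> Wg (k + n - m - 1) (YW v m w).
Variable P : W -> Prop.
Hypothesis subP : is_submodule YW P.

(* If W(q) <= P for all q < n, then the degree-n part of C_1(W) lies in P:
   a spanning vector v_{-1} t with v in V_(k), k >= 1, t in W(q) has degree
   k + q, which equals n only when q < n. *)
Lemma C1_deg_part_in (n : nat) z :
  (forall q : nat, (q < n)%N -> forall w, Wg q%:Z w -> P w) ->
  C1 Vg YW z -> deg_part_in Wg P n%:Z z.
Proof.
move=> Plow; have subP1 := subP.1.
apply: (deg_part_in_span gradWg subP1) => _ [v [t [[sv [fv [sv_pos [Gfv ->]]]] ->]]].
have [l [Gl ->]] := graded_decomposition gradWg t.
rewrite vop_suml // big_seq; apply: deg_part_in_sum => k ksv.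
rewrite vop_sumr // big_seq; apply: deg_part_in_sum => -[q t'] /Gl /= Gt'.
have Gvt : Wg (k + q) (YW (fv k) (-1) t').
  by have := Wg_wt (-1) (Gfv k) Gt'; rewrite opprK addrK.
apply: (deg_part_in_homogeneous Gvt) => deg_n.
have k_pos := sv_pos k ksv.
case: q Gt' {Gvt} deg_n => q Gt' deg_n.
  by apply: subP.2; apply: (Plow q) => //; lia.
by rewrite (Wg_neg _ Gt') // vop0r //; apply: subspace0.
Qed.

Variable s : seq W.
Hypothesis s_cofinite : forall w : W,
  exists y z, in_span (fun x => x \in s) y /\ C1 Vg YW z /\ w = y + z.
Hypothesis s_deg_part : forall (n : int) x, x \in s -> deg_part_in Wg P n x.

Lemma homogeneous_in_submodule (n : nat) w : Wg n%:Z w -> P w.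
Proof.
elim/ltn_ind: n w => n IH w Gw.
have subP1 := subP.1.
have [y [z [span_y [C1z ew]]]] := s_cofinite w; rewrite ew in Gw *.
apply: (deg_part_in_inP gradWg subP1 Gw); apply: deg_part_inD.
- exact: (deg_part_in_span gradWg subP1 (s_deg_part n)).
- exact: C1_deg_part_in IH C1z.
Qed.

Lemma submodule_full w : P w.
Proof.
have [l [Gl ->]] := graded_decomposition gradWg w.
rewrite big_seq; apply: (subspace_sum subP.1) => -[[q|q] t] /Gl /= Gt.
  exact: homogeneous_in_submodule Gt.
by rewrite (Wg_neg _ Gt) //; apply: subspace0; exact: subP.1.
Qed.

End Cofinite.

Theorem proposition2 (V : lmodType CC) (Vg : int -> V -> Prop) (Y : vop V V)
    (vac om : V) (c : CC) (W : lmodType CC) (YW : vop V W) :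
  is_VOA Vg Y vac om c ->
  is_weak_module Y vac YW ->
  N_gradable Vg YW ->
  C1_cofinite Vg YW ->
  finitely_generated YW.
Proof.
move=> _ HW [Wg [gradWg [Wg_neg Wg_wt]]] [s s_cofinite].
have [S s_pieces] := homogeneous_generators gradWg s.
exists S => P subP PS w.
apply: (submodule_full (wm_bilinear HW) gradWg Wg_neg Wg_wt subP s_cofinite).
move=> n x xs; have [l [Gl [lS ex]]] := s_pieces x xs.
by exists l; do 2!split => //; move=> p pl _; apply/PS/lS/map_f.
Qed.
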